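(* Let $\{\varphi_n\}_{n\ge1}$ be an orthonormal system on $[0,1]$ such that, uniformly in $x\in[0,1]$, $\int_0^x\varphi_n(u)\,du=O\!\left(\frac1n\right)$ as $n\to\infty$. Let $\{d_n\}$ be a sequence of real numbers with $d_n=O\!\left(\frac{\sqrt{n}}{\log^2(n+1)}\right)$. Then for every $a=\{a_n\}\in\ell_2$, $$B_n(d,a)\le \max_{x\in[0,1]}\left|\int_0^x\sum_{k=1}^n d_k a_k\log k\,\varphi_k(u)\,du\right|=O(1)\quad (n\to\infty),$$ where $B_n(d,a)=\max_{1\le i<n}\left|\int_0^{i/n}\sum_{k=1}^n d_k a_k\log k\,\varphi_k(x)\,dx\right|$.
   Context: An orthonormal system on $[0,1]$ is a sequence of functions orthonormal in $L_2(0,1)$. $\log$ denotes the logarithm (so $\log 1=0$). *)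

From HB Require Import structures.
From mathcomp Require Import all_boot all_order all_algebra.
From mathcomp Require Import all_classical all_reals all_analysis.
Set Implicit Arguments. Unset Strict Implicit. Unset Printing Implicit Defensive.
Import Order.TTheory GRing.Theory Num.Theory.
Import numFieldNormedType.Exports.
Local Open Scope classical_set_scope.
Local Open Scope ring_scope.

Definition int0 (R : realType) (x : R) (f : R -> R) : R :=
  Rintegral (@lebesgue_measure R) `[0, x] f.

Definition orthonormal_system (R : realType) (phi : nat -> R -> R) : Prop :=
  (forall n, (0 < n)%N ->
     measurable_fun (`[0%R, 1%R] : set R) (phi n) /\
     (@lebesgue_measure R).-integrable (`[0%R, 1%R] : set R)
        (fun x => ((phi n x) ^+ 2)%:E)) /\
  (forall n m, (0 < n)%N -> (0 < m)%N ->
     int0 1 (fun x => phi n x * phi m x) = (n == m)%:R).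

Definition in_l2 (R : realType) (a : nat -> R) : Prop :=
  cvg (series (fun k => a k ^+ 2) @ \oo).

Definition Fn (R : realType) (phi : nat -> R -> R) (d a : nat -> R)
  (n : nat) (x : R) : R :=
  int0 x (fun u => \sum_(1 <= k < n.+1) d k * a k * ln (k%:R) * phi k u).

Definition Bn (R : realType) (phi : nat -> R -> R) (d a : nat -> R)
  (n : nat) : R :=
  \big[Num.max/0]_(1 <= i < n) `|Fn phi d a n (i%:R / n%:R)|.

From HB Require Import structures.
From mathcomp Require Import all_boot all_order all_algebra.
From mathcomp Require Import all_classical all_reals all_analysis.
From mathcomp Require Import ring lra measurable_realfun.
Import Order.TTheory GRing.Theory Num.Theory.
Import numFieldNormedType.Exports.
Local Open Scope classical_set_scope.
Local Open Scope ring_scope.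

(** The k-th summand of F_n(x) is d_k a_k log k times int_0^x phi_k, so the two
   O-hypotheses bound it, for k large and uniformly in x, by a constant times
   |a_k| log k / (sqrt k log^2 (k+1)) <= a_k^2 + 1/(k log^2 (k+1)).  The first
   series converges because a is in l_2, the second by comparison with the
   telescoping series of 2 (1/log k - 1/log (k+1)).  Each of the finitely many
   remaining summands is bounded because x |-> int_0^x phi_k is continuous on
   [0,1]; the same continuity makes |F_n| attain its maximum, which dominates
   B_n. *)

Section finite_measure_set.
Context d (T : measurableType d) (R : realType).
Variables (mu : {measure set T -> \bar R}) (D : set T).
Hypotheses (mD : measurable D) (muD : (mu D < +oo)%E).

Lemma integrable_cst_finite (k : R) : mu.-integrable D (EFin \o cst k).
Proof.
apply/integrableP; split; first exact/measurable_EFinP.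
rewrite (eq_integral (cst `|k|%:E)) // integral_cst // lte_mul_pinfty //.
Qed.

Lemma integrable_of_sqr (f : T -> R) : measurable_fun D f ->
  mu.-integrable D (fun x => (f x ^+ 2)%:E) -> mu.-integrable D (EFin \o f).
Proof.
move=> mf if2.
have i1f2 := integrableD mD (integrable_cst_finite 1) if2.
apply: le_integrable i1f2 => // [|x _]; first exact/measurable_EFinP.
rewrite /= lee_fin [leRHS]ger0_norm ?addr_ge0 ?sqr_ge0 //.
rewrite -real_normK ?num_real //; have := normr_ge0 (f x); nra.
Qed.

End finite_measure_set.

Section Rintegral_sum.
Context d (T : measurableType d) (R : realType).
Variables (mu : {measure set T -> \bar R}) (D : set T) (mD : measurable D).

Lemma integrable_sumr (I : eqType) (s : seq I) (P : pred I) (f : I -> T -> R) :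
  (forall i, i \in s -> P i -> mu.-integrable D (EFin \o f i)) ->
  mu.-integrable D (fun x => (\sum_(i <- s | P i) f i x)%:E).
Proof.
move=> fi; under eq_fun do rewrite big_seq_cond -sumEFin.
by apply: integrable_sum => // i /andP[]; exact: fi.
Qed.

Lemma Rintegral_sum (I : eqType) (s : seq I) (P : pred I) (f : I -> T -> R) :
  (forall i, i \in s -> P i -> mu.-integrable D (EFin \o f i)) ->
  \int[mu]_(x in D) (\sum_(i <- s | P i) f i x) =
  \sum_(i <- s | P i) \int[mu]_(x in D) f i x.
Proof.
elim: s => [|i s IH] fi.
  by under eq_Rintegral do rewrite big_nil; rewrite Rintegral_cst // mul0r big_nil.
have fs j : j \in s -> P j -> mu.-integrable D (EFin \o f j).
  by move=> js; apply: fi; rewrite in_cons js orbT.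
under eq_Rintegral do rewrite big_cons; rewrite big_cons.
case: ifPn => Pi; last exact: IH.
rewrite RintegralD ?IH //; first exact: fi (mem_head i s) Pi.
exact: integrable_sumr.
Qed.

End Rintegral_sum.

Section sums.
Context {R : realDomainType}.

Lemma ler_sum_subrange (F : nat -> R) (m n m' n' : nat) :
  (m' <= m)%N -> (n <= n')%N -> (forall k, 0 <= F k) ->
  \sum_(m <= k < n) F k <= \sum_(m' <= k < n') F k.
Proof.
move=> m'm nn' F0; have [nm|mn] := leqP n m; first by rewrite big_geq ?sumr_ge0.
rewrite (big_cat_nat m'm (leq_trans (ltnW mn) nn')) (big_cat_nat (ltnW mn) nn').
by rewrite /= addrC -addrA lerDl addr_ge0 // sumr_ge0.
Qed.

Lemma bounded_sum_of_eventually_dominated {T : Type} {A : set T}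
    {f : nat -> T -> R} {b : nat -> R} {m K : nat} {S : R} :
  (m <= K)%N ->
  (forall k, (m <= k < K)%N -> exists c, forall x, A x -> `|f k x| <= c) ->
  (forall k x, (K <= k)%N -> A x -> `|f k x| <= b k) ->
  (forall n, \sum_(K <= k < n) b k <= S) ->
  exists M, forall n x, A x -> `|\sum_(m <= k < n) f k x| <= M.
Proof.
move=> mK f_bdd f_dom sum_b.
have [c f_c] : exists c : nat -> R,
    forall k x, (m <= k < K)%N -> A x -> `|f k x| <= c k.
  suff /choice[c fc] : forall k, exists c : R,
      forall x, (m <= k < K)%N -> A x -> `|f k x| <= c by exists c.
  move=> k; have [/f_bdd[c fc]|kK] := boolP (m <= k < K)%N.
    by exists c => x _; exact: fc.
  by exists 0.
have S0 : 0 <= S by apply: le_trans (sum_b K); rewrite big_geq.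
exists (\sum_(m <= k < K) `|c k| + S) => n x Ax.
apply: le_trans (ler_norm_sum _ _ _) _.
have [nK|Kn] := leqP n K.
  apply: le_trans (_ : _ <= \sum_(m <= k < n) `|c k|) _.
    apply: ler_sum_nat => k /andP[mk kn].
    by apply: le_trans (f_c k x _ Ax) (ler_norm _); rewrite mk (leq_trans kn).
  apply: le_trans (ler_sum_subrange _ _ _ _ _ (leqnn m) nK (fun k => normr_ge0 (c k))) _.
  by rewrite lerDl.
rewrite (big_cat_nat mK (ltnW Kn)) /=; apply: lerD.
  apply: ler_sum_nat => k mkK.
  exact: le_trans (f_c k x mkK Ax) (ler_norm _).
apply: le_trans (sum_b n); apply: ler_sum_nat => k /andP[Kk _].
exact: f_dom.
Qed.

End sums.

Section real.
Context {R : realType}.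

Lemma int0_norm_max (g : R -> R) (b : R) : 0 <= b ->
  (@lebesgue_measure R).-integrable `[0, b] (EFin \o g) ->
  exists2 x0, 0 <= x0 <= b &
    forall x, 0 <= x <= b -> `|int0 x g| <= `|int0 x0 g|.
Proof.
move=> b0 ig.
have cg := parameterized_integral_continuous b0 ig.
have cn : {within `[0, b], continuous (fun x => `|int0 x g|)}.
  by move=> x; apply: cvg_norm; exact: cg.
have [x0 + max_x0] := EVT_max b0 cn; rewrite in_itv /= => x0b.
by exists x0 => // x xb; apply: max_x0; rewrite in_itv.
Qed.

Lemma ln_succ_sub_ge (x : R) : 0 < x -> (x + 1)^-1 <= ln (x + 1) - ln x.
Proof.
move=> x0; have x10 : 0 < x + 1 by lra.
have ratio : x / (x + 1) = 1 + - (x + 1)^-1 by field; rewrite gt_eqF.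
have := @le_ln1Dx R (- (x + 1)^-1).
rewrite -ratio ln_div ?posrE // ltrNl opprK invf_lt1 //; lra.
Qed.

Lemma inv_mul_ln_sqr_le (k : nat) : (2 <= k)%N ->
  (k%:R * ln k.+1%:R ^+ 2)^-1 <= 2 * ((ln k%:R)^-1 - (ln k.+1%:R)^-1) :> R.
Proof.
move=> k2; have k0 : (0 : R) < k%:R by rewrite ltr0n (leq_trans _ k2).
set l := ln (k%:R : R); set l1 := ln (k.+1%:R : R).
have l0 : 0 < l by rewrite ln_gt0 // ltr1n.
have l01 : l <= l1.
  by rewrite ler_ln ?posrE ?ltr0n ?(leq_trans _ k2) // -natr1 lerDl.
have gap : (k%:R + 1)^-1 <= l1 - l by rewrite /l1 -natr1; exact: ln_succ_sub_ge.
have gap' : 1 <= (l1 - l) * (k%:R + 1).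
  by rewrite -ler_pdivrMr ?div1r //; lra.
rewrite -subr_ge0.
have -> : 2 * (l^-1 - l1^-1) - (k%:R * l1 ^+ 2)^-1 =
    (2 * k%:R * l1 * (l1 - l) - l) / (l * l1 ^+ 2 * k%:R).
  by field; rewrite !gt_eqF //; lra.
apply: divr_ge0; last by rewrite !mulr_ge0 // ltW //; lra.
have k1 : 1 <= (k%:R : R) by rewrite ler1n (leq_trans _ k2).
have twice_gap : 1 <= 2 * k%:R * (l1 - l) by nra.
nra.
Qed.

Lemma sum_inv_mul_ln_sqr_le (K n : nat) : (2 <= K)%N ->
  \sum_(K <= k < n) (k%:R * ln k.+1%:R ^+ 2)^-1 <= 2 / ln K%:R :> R.
Proof.
move=> K2; have lnK : 0 <= 2 / ln (K%:R : R).
  by rewrite divr_ge0 // ln_ge0 // ler1n (leq_trans _ K2).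
have [nK|Kn] := leqP n K; first by rewrite big_geq.
apply: le_trans (_ : \sum_(K <= k < n) 2 * ((ln k%:R)^-1 - (ln k.+1%:R)^-1) <= _).
  apply: ler_sum_nat => k /andP[Kk _]; exact/inv_mul_ln_sqr_le/(leq_trans K2).
rewrite -mulr_sumr ler_pM2l //.
under eq_bigr do rewrite -opprB.
rewrite sumrN (telescope_sumr (fun k => (ln (k%:R : R))^-1)); last exact: ltnW.
by rewrite opprB gerBl invr_ge0 ln_ge0 // ler1n (leq_trans (ltnW K2) (ltnW Kn)).
Qed.

Lemma norm_summand_le {k : nat} {c1 c2 dk ak I : R} : (0 < k)%N ->
  `|dk| <= c2 * Num.sqrt k%:R / ln k.+1%:R ^+ 2 -> `|I| <= c1 / k%:R ->
  `|dk * ak * ln k%:R * I| <= c2 * c1 * (ak ^+ 2 + (k%:R * ln k.+1%:R ^+ 2)^-1).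
Proof.
move=> k0; set s := Num.sqrt (k%:R : R); set l := ln (k%:R : R).
set l1 := ln (k.+1%:R : R) => dk_le I_le.
have s0 : 0 < s by rewrite sqrtr_gt0 ltr0n.
have l0 : 0 <= l by rewrite ln_ge0 // ler1n.
have l01 : l <= l1 by rewrite ler_ln ?posrE ?ltr0n // -natr1 lerDl.
have l1_0 : 0 < l1 by rewrite ln_gt0 // ltr1n ltnS.
have ks : k%:R = s ^+ 2 by rewrite sqr_sqrtr // ler0n.
set q := (s * l1)^-1.
have q0 : 0 <= q by rewrite invr_ge0 mulr_ge0 // ltW.
rewrite ks in I_le.
have c1_0 : 0 <= c1.
  by rewrite -(pmulr_lge0 _ (_ : 0 < (s ^+ 2)^-1)) ?invr_gt0 ?exprn_gt0 // (le_trans _ I_le).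
have c2_0 : 0 <= c2.
  rewrite -(pmulr_lge0 _ (_ : 0 < s / l1 ^+ 2)) ?divr_gt0 ?exprn_gt0 //.
  by rewrite mulrA (le_trans _ dk_le).
have dI : `|dk| * `|I| <= c2 * c1 * (s * l1 ^+ 2)^-1.
  apply: le_trans (ler_pM _ _ dk_le I_le) _ => //.
  by rewrite le_eqVlt; apply/orP; left; apply/eqP; field; rewrite !gt_eqF.
have -> : `|dk * ak * l * I| = `|dk| * `|I| * (`|ak| * l).
  by rewrite !normrM (ger0_norm l0); ring.
have akl : `|ak| * l <= `|ak| * l1 by rewrite ler_wpM2l.
apply: le_trans (ler_pM _ _ dI akl) _; rewrite ?mulr_ge0 //.
have -> : c2 * c1 / (s * l1 ^+ 2) * (`|ak| * l1) = c2 * c1 * (`|ak| * q).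
  by rewrite /q; field; rewrite !gt_eqF.
rewrite ler_wpM2l ?mulr_ge0 //.
have -> : (k%:R * l1 ^+ 2)^-1 = q ^+ 2 by rewrite ks /q; field; rewrite !gt_eqF.
rewrite -real_normK ?num_real //; have := normr_ge0 ak; nra.
Qed.

Lemma sum_sqr_le_l2 (a : nat -> R) (m n : nat) : in_l2 a ->
  \sum_(m <= k < n) a k ^+ 2 <= limn (series (fun k => a k ^+ 2)).
Proof.
move=> a_l2; apply: le_trans (nondecreasing_cvgn_le _ a_l2 n).
  exact/ler_sum_subrange/(fun k => sqr_ge0 (a k)).
by apply: nondecreasing_series => k _ _; exact: sqr_ge0.
Qed.

End real.

Section Fn.
Context {R : realType} {phi : nat -> R -> R} (d a : nat -> R).
Hypothesis phi_on : orthonormal_system phi.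

Lemma orthonormal_integrable {k : nat} {x : R} : (0 < k)%N -> x <= 1 ->
  (@lebesgue_measure R).-integrable `[0, x] (EFin \o phi k).
Proof.
move=> k0 x1; have [mphi phi2] := phi_on.1 k k0.
apply: integrableS (_ : (@lebesgue_measure R).-integrable `[0, 1] _) => //.
  by move=> u /=; rewrite !in_itv /= => /andP[-> /le_trans->].
apply: integrable_of_sqr => //.
by have := @lebesgue_measure_itv R `[0%R, 1%R]; rewrite /= lte01 sube0 => ->; exact: ltry.
Qed.

Lemma integrable_Fn_summand (k : nat) (x : R) : (0 < k)%N -> x <= 1 ->
  (@lebesgue_measure R).-integrable `[0, x]
    (EFin \o (fun u => d k * a k * ln k%:R * phi k u)).
Proof.
move=> k0 x1.
by apply: eq_integrable (integrableZl _ (d k * a k * ln k%:R) (orthonormal_integrable k0 x1)).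
Qed.

Lemma Fn_sum (n : nat) (x : R) : x <= 1 ->
  Fn phi d a n x = \sum_(1 <= k < n.+1) d k * a k * ln k%:R * int0 x (phi k).
Proof.
move=> x1; rewrite /Fn /int0 Rintegral_sum //; last first.
  by move=> k; rewrite mem_index_iota => /andP[k0 _] _; exact: integrable_Fn_summand.
rewrite big_nat_cond [RHS]big_nat_cond; apply: eq_bigr => k /andP[/andP[k0 _] _].
by rewrite RintegralZl //; exact: orthonormal_integrable.
Qed.

Lemma Bn_le (n : nat) (v : R) :
  (forall x, 0 <= x <= 1 -> `|Fn phi d a n x| <= v) -> Bn phi d a n <= v.
Proof.
move=> Fn_le_v; rewrite /Bn big_nat_cond; apply: bigmax_le.
  by apply: le_trans (Fn_le_v 0 _); rewrite ?lexx ?ler01.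
move=> i /andP[/andP[i1 iN] _]; apply: Fn_le_v.
rewrite divr_ge0 ?ler0n //= ler_pdivrMr ?ltr0n ?(leq_trans _ iN) //.
by rewrite mul1r ler_nat ltnW.
Qed.

Lemma Fn_norm_max (n : nat) : exists x0, 0 <= x0 <= 1 /\
  (forall x, 0 <= x <= 1 -> `|Fn phi d a n x| <= `|Fn phi d a n x0|) /\
  Bn phi d a n <= `|Fn phi d a n x0|.
Proof.
have [|x0 x0_01 x0_max] :=
    int0_norm_max (fun u => \sum_(1 <= k < n.+1) d k * a k * ln k%:R * phi k u) 1 ler01.
  apply: integrable_sumr => // k; rewrite mem_index_iota => /andP[k0 _] _.
  exact: integrable_Fn_summand.
by exists x0; split; [|split; [|apply: Bn_le]].
Qed.

End Fn.

Theorem theorem5 (R : realType) (phi : nat -> R -> R) (d : nat -> R) :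
  orthonormal_system phi ->
  (exists C : R, exists N : nat, forall n : nat, (N <= n)%N ->
     forall x : R, 0 <= x <= 1 -> `|int0 x (phi n)| <= C / n%:R) ->
  (exists C : R, exists N : nat, forall n : nat, (N <= n)%N ->
     `|d n| <= C * Num.sqrt (n%:R) / (ln (n.+1%:R)) ^+ 2) ->
  forall a : nat -> R, in_l2 a ->
    (forall n : nat, (1 <= n)%N ->
       exists x0 : R, 0 <= x0 <= 1 /\
         (forall x : R, 0 <= x <= 1 -> `|Fn phi d a n x| <= `|Fn phi d a n x0|) /\
         Bn phi d a n <= `|Fn phi d a n x0|) /\
    (exists M : R, exists N : nat, forall n : nat, (N <= n)%N ->
       forall x : R, 0 <= x <= 1 -> `|Fn phi d a n x| <= M).
Proof.
move=> phi_on [C1 [N1 int0_phi_le]] [C2 [N2 d_le]] a a_l2.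
split=> [n _|]; first exact: Fn_norm_max.
pose K := maxn (maxn N1 N2) 2.
pose b k := `|C2 * C1| * (a k ^+ 2 + (k%:R * ln k.+1%:R ^+ 2)^-1).
pose term k x := d k * a k * ln k%:R * int0 x (phi k).
have term_bdd k : (1 <= k < K)%N ->
    exists c, forall x, [set x | 0 <= x <= 1] x -> `|term k x| <= c.
  case/andP => k0 _.
  have [x0 _ x0_max] := int0_norm_max _ _ ler01 (orthonormal_integrable phi_on k0 (lexx 1)).
  exists (`|d k * a k * ln k%:R| * `|int0 x0 (phi k)|) => x x01.
  by rewrite /term normrM ler_wpM2l // x0_max.
have term_dom k x : (K <= k)%N -> [set x | 0 <= x <= 1] x -> `|term k x| <= b k.
  move=> Kk x01.
  have N1k : (N1 <= k)%N by apply: leq_trans Kk; rewrite !leq_max leqnn.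
  have N2k : (N2 <= k)%N by apply: leq_trans Kk; rewrite !leq_max leqnn orbT.
  have k0 : (0 < k)%N by apply: leq_trans Kk; rewrite !leq_max orbT.
  apply: le_trans (norm_summand_le k0 (d_le k N2k) (int0_phi_le k N1k x x01)) _.
  by rewrite ler_wpM2r ?ler_norm // addr_ge0 ?sqr_ge0 // invr_ge0 mulr_ge0 ?sqr_ge0.
have sum_b n : \sum_(K <= k < n) b k <=
    `|C2 * C1| * (limn (series (fun k => a k ^+ 2)) + 2 / ln K%:R).
  rewrite -mulr_sumr big_split /= ler_wpM2l // lerD //; first exact: sum_sqr_le_l2.
  by apply: sum_inv_mul_ln_sqr_le; rewrite leq_maxr.
have K1 : (1 <= K)%N by rewrite leq_max orbT.
have [M Fn_le] := bounded_sum_of_eventually_dominated K1 term_bdd term_dom sum_b.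
by exists M, 0%N => n _ x /[dup] /andP[_ x1] /(Fn_le n.+1); rewrite Fn_sum.
Qed.
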